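(* Let $1 \le s \le r$ be fixed integers and let $n \ge r$. Let $H_1, H_2, \ldots$ be independent, each uniformly distributed over the $r$-element subsets of $[n] = \{1, \ldots, n\}$. An $s$-element subset $S \subseteq [n]$ is said to be collected by time $k$ if $S \subseteq H_t$ for some $t \le k$. Let $T^{(r,s)}$ be the smallest $k$ such that all $\binom{n}{s}$ $s$-element subsets of $[n]$ have been collected by time $k$. Then, as $n \to \infty$, \[ \frac{T^{(r,s)} - \binom{n}{s}\log\binom{n}{s}\big/\binom{r}{s}}{\binom{n}{s}\big/\binom{r}{s}} \] converges weakly to a standard Gumbel distribution, i.e. the distribution with cumulative distribution function $x \mapsto e^{-e^{-x}}$.
   Context: In each round $t$ one draws $r$ distinct coupons uniformly at random (without replacement) from $[n]$, independently across rounds; all $s$-subsets of the drawn $r$-set are marked as collected. *)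

From mathcomp Require Import all_boot all_order all_algebra.
From mathcomp Require Import all_classical all_reals all_analysis.
Set Implicit Arguments. Unset Strict Implicit. Unset Printing Implicit Defensive.
Import Order.TTheory GRing.Theory Num.Theory.
Local Open Scope ring_scope.

(* A history of the first k rounds: H t for t < k, each an r-subset of [n]
   (ground set [n] represented by 'I_n). *)
Definition valid_history (n r k : nat) (H : {ffun 'I_k -> {set 'I_n}}) : bool :=
  [forall t, #|H t| == r].

Definition all_collected (n s k : nat) (H : {ffun 'I_k -> {set 'I_n}}) : bool :=
  [forall S : {set 'I_n}, (#|S| == s) ==> [exists t, S \subset H t]].

(* P(T^{(r,s)} <= k): the first k rounds are i.i.d. uniform over the
   'C(n,r) r-subsets, so the law of (H_1..H_k) is uniform over valid
   histories; T <= k iff all s-subsets are collected by time k. *)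
Definition prob_T_le_nat (R : realType) (n r s k : nat) : R :=
  #|[set H : {ffun 'I_k -> {set 'I_n}} | valid_history r H && all_collected s H]|%:R
  / ('C(n, r) ^ k)%:R.

(* P(T^{(r,s)} <= y) for real y (T is integer valued). *)
Definition prob_T_le (R : realType) (n r s : nat) (y : R) : R :=
  if y < 0 then 0 else prob_T_le_nat R n r s (Num.truncn y).

(* Centering a_n = C(n,s) log C(n,s) / C(r,s) and scaling b_n = C(n,s)/C(r,s). *)
Definition center (R : realType) (n r s : nat) : R :=
  ('C(n, s))%:R * ln (('C(n, s))%:R) / ('C(r, s))%:R.
Definition scale (R : realType) (n r s : nat) : R :=
  ('C(n, s))%:R / ('C(r, s))%:R.

(* CDF of the normalized variable (T - a_n)/b_n at x:
   P((T - a_n)/b_n <= x) = P(T <= a_n + b_n x) since b_n > 0 for n >= s. *)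
Definition normalized_cdf (R : realType) (n r s : nat) (x : R) : R :=
  prob_T_le n r s (center R n r s + scale R n r s * x).

Definition gumbel_cdf (R : realType) (x : R) : R := expR (- expR (- x)).

(* Let U be the number of s-sets still uncollected after k rounds, so that
   P(T <= k) = P(U = 0), and let S_j = E[C(U, j)].  Summing the Bonferroni
   inequalities for [U = 0] brackets P(T <= k) between consecutive partial sums
   of sum_j (-1)^j S_j.  Counting pairs (family, history), S_j is the sum over
   the j-families F of s-sets of q_F^k, where q_F is the probability that a
   uniform r-set contains no member of F; the Bonferroni inequalities of order
   one and two for a single round give
     1 - j p <= q_F <= 1 - j p (1 - j (r - s) / (n - s)),  p = C(r,s) / C(n,s).
   For N = C(n,s) and k = floor((N ln N + N x) / C(r,s)) one has
   k ln (1 - j p) = - j (ln N + x) + o(1), hence S_j -> e^(-jx) / j!, and the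
   partial sums of sum_j (-1)^j e^(-jx) / j! converge to exp (- e^(-x)). *)

From Pilot Require Import Defs.
From mathcomp Require Import all_classical all_reals all_analysis.
(* Imported last so that finset's subsetP and subset_trans are not shadowed by
   their classical_sets namesakes. *)
From mathcomp Require Import all_boot all_order all_algebra.
From mathcomp Require Import ring lra zify.
Set Implicit Arguments. Unset Strict Implicit. Unset Printing Implicit Defensive.
Import Order.TTheory GRing.Theory Num.Theory.
Import numFieldNormedType.Exports.
Local Open Scope ring_scope.

Lemma alternating_bin_sum (R : pzRingType) (X m : nat) :
  \sum_(j < m.+1) (-1) ^+ j * 'C(X, j)%:R =
  (if X is X'.+1 then (-1) ^+ m * 'C(X', m)%:R else 1) :> R.
Proof.
elim: m => [|m IH]; first by case: X => [|X]; rewrite big_ord1 ?bin0 mul1r.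
rewrite big_ord_recr /= IH; case: X {IH} => [|X]; first by rewrite bin0n mulr0 addr0.
by rewrite binS natrD exprS mulN1r mulNr mulrDr opprD addrA addrAC subrr add0r mulNr.
Qed.

Lemma bonferroni_bin (R : numDomainType) (X m : nat) :
  let B := \sum_(j < m.+1) (-1) ^+ j * 'C(X, j)%:R in
  if odd m then B <= (X == 0)%N%:R :> R else (X == 0)%N%:R <= B.
Proof.
rewrite /= alternating_bin_sum; case: X => [|X] /=; first by case: (odd m).
rewrite -signr_odd; case: (odd m); rewrite ?expr1 ?expr0 ?mulN1r ?mul1r //.
by rewrite oppr_le0.
Qed.

Lemma card_set_in_pred (T : finType) (Y : {set T}) (P : pred T) :
  (#|[set y in Y | P y]| = \sum_(y in Y) P y)%N.
Proof. by rewrite -sum1dep_card big_mkcondr. Qed.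

Lemma double_count (A B : finType) (X : {set A}) (Y : {set B}) (rel : A -> B -> bool) :
  (\sum_(a in X) #|[set b in Y | rel a b]| = \sum_(b in Y) #|[set a in X | rel a b]|)%N.
Proof.
under eq_bigr do rewrite card_set_in_pred.
under [RHS]eq_bigr do rewrite card_set_in_pred.
exact: exchange_big.
Qed.

Lemma sum_bin_card (A B : finType) (Z : {set A}) (Y : {set B}) (U : B -> {set A}) j :
  {in Y, forall b, U b \subset Z} ->
  (\sum_(b in Y) 'C(#|U b|, j) =
   \sum_(P in [set P : {set A} | P \subset Z & #|P| == j]) #|[set b in Y | P \subset U b]|)%N.
Proof.
move=> UZ; rewrite (double_count _ _ (fun (P : {set A}) b => P \subset U b)).
apply: eq_bigr => b Yb; rewrite -cards_draws; apply: eq_card => P; rewrite !inE.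
by case PU: (P \subset U b); rewrite ?andbF ?andbT // (subset_trans PU (UZ b Yb)).
Qed.

Lemma ffact_bounds N j : ((N - j) ^ j <= N ^_ j <= N ^ j)%N.
Proof.
have -> : ((N - j) ^ j = \prod_(i < j) (N - j))%N by rewrite prod_nat_const card_ord.
have -> : (N ^ j = \prod_(i < j) N)%N by rewrite prod_nat_const card_ord.
rewrite ffact_prod; apply/andP; split; apply: leq_prod => i _.
  exact/leq_sub2l/ltnW.
exact: leq_subr.
Qed.

Lemma bin_le_exp n m : ('C(n, m) <= n ^ m)%N.
Proof.
apply: leq_trans (leq_pmulr _ (fact_gt0 m)) _.
by rewrite bin_ffact; case/andP: (ffact_bounds n m).
Qed.

Lemma bin_gt_sub s d : (0 < s)%N -> (d < 'C(s + d, s))%N.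
Proof.
case: s => // s _; elim: d => [|d IH]; first by rewrite addn0 binn.
by rewrite addnS binS -addn1 leq_add // bin_gt0; lia.
Qed.

Section Collection.
Variable n : nat.
Implicit Types (A S T h : {set 'I_n}) (F : {set {set 'I_n}}).

Definition ksets (m : nat) : {set {set 'I_n}} := [set A : {set 'I_n} | #|A| == m].

Lemma card_ksets m : #|ksets m| = 'C(n, m).
Proof. by rewrite card_draws card_ord. Qed.

Lemma card_supsets r T : (#|T| <= r)%N ->
  #|[set h in ksets r | T \subset h]| = 'C(n - #|T|, r - #|T|).
Proof.
move=> Tr; pose D := [set A : {set 'I_n} | A \subset ~: T & #|A| == (r - #|T|)%N].
have UDK h : T \subset h -> (h :\: T) :|: T = h.
  move=> Th; apply/setP => x; rewrite !inE.
  by case: (boolP (x \in T)) => [xT | _]; rewrite ?orbT ?(subsetP Th x xT) ?orbF ?andbT.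
have DUK A : A \subset ~: T -> (A :|: T) :\: T = A.
  by move=> AT; rewrite setDUl setDv setU0; apply/setDidPl; rewrite disjoints_subset.
have -> : [set h in ksets r | T \subset h] = [set A :|: T | A in D].
  apply/setP => h; rewrite !inE; apply/andP/imsetP => [[/eqP hr Th] | [A]].
    exists (h :\: T); last by rewrite UDK.
    by rewrite inE subsetDr cardsDS // hr eqxx.
  rewrite inE => /andP [AT /eqP cA] ->; split; last exact: subsetUr.
  have /eqP AT0 : A :&: T == set0 by rewrite setI_eq0 disjoints_subset.
  by rewrite cardsU AT0 cards0 subn0 cA subnK.
have injD : {in D &, injective (fun A => A :|: T)}.
  move=> A1 A2; rewrite !inE => /andP [A1T _] /andP [A2T _] eqA.
  by rewrite -(DUK A1) // eqA DUK.
by rewrite (card_in_imset injD) cards_draws -[n in 'C(n - _, _)](card_ord n) -(cardsC T) addKn.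
Qed.

Lemma mul_bin_bin r s : (s <= r)%N ->
  ('C(n, r) * 'C(r, s) = 'C(n, s) * 'C(n - s, r - s))%N.
Proof.
move=> sr; rewrite -!card_ksets -!sum_nat_const.
rewrite (eq_bigr (fun h => #|[set S in ksets s | S \subset h]|)); last first.
  move=> h; rewrite inE => /eqP <-; rewrite -cards_draws.
  by apply: eq_card => S; rewrite !inE andbC.
rewrite [RHS](eq_bigr (fun S => #|[set h in ksets r | S \subset h]|)); last first.
  by move=> S; rewrite inE => /eqP Ss; rewrite card_supsets Ss.
exact: double_count.
Qed.

Definition histories r k : {set {ffun 'I_k -> {set 'I_n}}} := [set H | valid_history r H].

Definition uncollected s k (H : {ffun 'I_k -> {set 'I_n}}) : {set {set 'I_n}} :=
  [set S in ksets s | [forall t, ~~ (S \subset H t)]].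

Lemma all_collectedE s k (H : {ffun 'I_k -> {set 'I_n}}) :
  all_collected s H = (uncollected s H == set0).
Proof.
apply/forallP/eqP => [allH | U0 S].
  apply/setP => S; rewrite !inE; have := allH S.
  case: (#|S| == s) => //= /existsP [t Ht]; apply/negbTE; rewrite negb_forall.
  by apply/existsP; exists t; rewrite Ht.
apply/implyP => Ss; have : S \notin uncollected s H by rewrite U0 inE.
by rewrite !inE Ss negb_forall => /existsP [t]; rewrite negbK => Ht; apply/existsP; exists t.
Qed.

Definition avoiding r F : {set {set 'I_n}} :=
  [set h in ksets r | [forall S in F, ~~ (S \subset h)]].

Lemma card_histories_avoiding r s k F : F \subset ksets s ->
  #|[set H in histories r k | F \subset uncollected s H]| = (#|avoiding r F| ^ k)%N.
Proof.
move=> Fs; rewrite -[k in RHS]card_ord -card_ffun_on; apply: eq_card => H.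
rewrite !inE; apply/andP/ffun_onP => [[/forallP Hr /subsetP FU] t | HF].
  rewrite !inE Hr; apply/forall_inP => S SF.
  by have := FU S SF; rewrite inE => /andP [_ /forallP].
split; first by apply/forallP => t; have := HF t; rewrite !inE => /andP [].
apply/subsetP => S SF; rewrite inE (subsetP Fs S SF); apply/forallP => t.
by have := HF t; rewrite inE => /andP [_ /forall_inP]; apply.
Qed.

Definition families (s j : nat) : {set {set {set 'I_n}}} :=
  [set F : {set {set 'I_n}} | F \subset ksets s & #|F| == j].

Lemma sum_bin_uncollected r s k j :
  (\sum_(H in histories r k) 'C(#|uncollected s H|, j) =
   \sum_(F in families s j) #|avoiding r F| ^ k)%N.
Proof.
rewrite (sum_bin_card (Z := ksets s)) => [|H _]; last first.
  by apply/subsetP => S; rewrite inE => /andP [].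
by apply: eq_bigr => F; rewrite inE => /andP [Fs _]; apply: card_histories_avoiding.
Qed.

Definition bin_moment (R : numFieldType) r s k j : R :=
  \sum_(F in families s j) (#|avoiding r F|%:R / 'C(n, r)%:R) ^+ k.

Lemma bin_momentE (R : numFieldType) r s k j : (r <= n)%N ->
  bin_moment R r s k j * ('C(n, r) ^ k)%:R =
  (\sum_(H in histories r k) 'C(#|uncollected s H|, j))%:R.
Proof.
move=> rn; rewrite sum_bin_uncollected natr_sum mulr_suml; apply: eq_bigr => F _.
by rewrite expr_div_n !natrX mulfVK // expf_neq0 // pnatr_eq0 -lt0n bin_gt0.
Qed.

Lemma bonferroni_collected (R : realType) r s k m : (r <= n)%N ->
  let B := \sum_(j < m.+1) (-1) ^+ j * bin_moment R r s k j in
  if odd m then B <= prob_T_le_nat R n r s k else prob_T_le_nat R n r s k <= B.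
Proof.
move=> rn /=; set B := \sum_(j < m.+1) _.
have Ck_gt0 : (0 : R) < ('C(n, r) ^ k)%:R by rewrite ltr0n expn_gt0 bin_gt0 rn.
have PE : prob_T_le_nat R n r s k * ('C(n, r) ^ k)%:R =
    \sum_(H in histories r k) (#|uncollected s H| == 0)%N%:R.
  rewrite mulfVK ?gt_eqF // (_ : [set H | _] = [set H in histories r k | all_collected s H]).
    rewrite card_set_in_pred natr_sum; apply: eq_bigr => H _.
    by rewrite all_collectedE cards_eq0.
  by apply/setP => H; rewrite !inE.
have BE : B * ('C(n, r) ^ k)%:R =
    \sum_(H in histories r k) \sum_(j < m.+1) (-1) ^+ j * 'C(#|uncollected s H|, j)%:R.
  rewrite mulr_suml exchange_big; apply: eq_bigr => j _.
  by rewrite -mulrA bin_momentE // natr_sum mulr_sumr.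
have := fun H => bonferroni_bin R #|uncollected s H| m.
by case: (odd m) => /= bH; rewrite -(ler_pM2r Ck_gt0) PE BE; apply: ler_sum => H _; apply: bH.
Qed.

Definition covered F h : {set {set 'I_n}} := [set S in F | S \subset h].

Lemma card_avoiding r F : #|avoiding r F| = (\sum_(h in ksets r) (#|covered F h| == 0))%N.
Proof.
rewrite -card_set_in_pred; apply: eq_card => h; rewrite !inE cards_eq0; congr (_ && _).
apply/forall_inP/eqP => [noS | cov0 S SF].
  by apply/setP => S; rewrite !inE; case: (boolP (S \in F)) => // /noS /negbTE ->.
apply/negP => Sh; suff : S \in covered F h by rewrite cov0 inE.
by rewrite inE SF Sh.
Qed.

Lemma sum_card_covered r s F : (s <= r)%N -> F \subset ksets s ->
  (\sum_(h in ksets r) #|covered F h| = #|F| * 'C(n - s, r - s))%N.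
Proof.
move=> sr Fs; rewrite -(double_count F (ksets r) (fun S h => S \subset h)) -sum_nat_const.
by apply: eq_bigr => S /(subsetP Fs); rewrite inE => /eqP Ss; rewrite card_supsets Ss.
Qed.

Lemma card_supsets2 r s S S' : S \in ksets s -> S' \in ksets s -> S != S' ->
  ((n - s) * #|[set h in ksets r | S \subset h & S' \subset h]| <=
   (r - s) * 'C(n - s, r - s))%N.
Proof.
rewrite !inE => /eqP Ss /eqP S's SS'.
have [a aS' aS] : exists2 a, a \in S' & a \notin S.
  apply/subsetPn; apply: contra SS' => S'S.
  by rewrite eq_sym eqEcard S'S Ss S's leqnn.
have aSs : #|a |: S| = s.+1 by rewrite cardsU1 aS Ss.
have sub : [set h in ksets r | S \subset h & S' \subset h] \subset
           [set h in ksets r | a |: S \subset h].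
  apply/subsetP => h; rewrite !inE => /and3P [-> Sh S'h].
  by rewrite subUset sub1set Sh (subsetP S'h a aS').
apply: leq_trans (leq_mul (leqnn _) (subset_leq_card sub)) _.
have [sr | rs] := ltnP s r.
  by rewrite card_supsets aSs // !subnS mul_bin_diag prednK // subn_gt0.
suff -> : #|[set h in ksets r | a |: S \subset h]| = 0%N by rewrite muln0.
apply: eq_card0 => h; rewrite !inE; apply/negP => /andP [/eqP hr /subset_leq_card].
by rewrite aSs hr ltnNge rs.
Qed.

Lemma sum_bin2_covered r s F : F \subset ksets s ->
  ((n - s) * \sum_(h in ksets r) 'C(#|covered F h|, 2) <=
   'C(#|F|, 2) * ((r - s) * 'C(n - s, r - s)))%N.
Proof.
move=> Fs; rewrite (sum_bin_card (Z := F)) => [|h _]; last first.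
  by apply/subsetP => S; rewrite inE => /andP [].
rewrite -cards_draws -sum_nat_const big_distrr /=; apply: leq_sum => P.
rewrite inE => /andP [PF /cards2P [S [S' [SS' PE]]]].
have SF : S \in F by apply: (subsetP PF); rewrite PE set21.
have S'F : S' \in F by apply: (subsetP PF); rewrite PE set22.
apply: leq_trans (card_supsets2 r (subsetP Fs S SF) (subsetP Fs S' S'F) SS').
apply/leq_mul/subset_leq_card => //; apply/subsetP => h; rewrite !inE PE.
case/andP => -> /subsetP cov; move: (cov S (set21 S S')) (cov S' (set22 S S')).
by rewrite !inE => /andP [_ ->] /andP [_ ->].
Qed.

(* Pointwise in h, with c the number of members of F inside h:
   1 <= [c == 0] + c <= 1 + 'C(c, 2). *)
Lemma card_avoiding_bounds r s F : (s <= r)%N -> F \subset ksets s ->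
  ('C(n, r) <= #|avoiding r F| + #|F| * 'C(n - s, r - s) <=
   'C(n, r) + \sum_(h in ksets r) 'C(#|covered F h|, 2))%N.
Proof.
move=> sr Fs; have -> : 'C(n, r) = (\sum_(h in ksets r) 1)%N by rewrite sum1_card card_ksets.
rewrite card_avoiding -sum_card_covered // -!big_split /=.
apply/andP; split; apply: leq_sum => h _; first by case: #|covered F h|.
by case: #|covered F h| => [|[|c]] //; rewrite binS bin1 add1n ltnS leq_addl.
Qed.

Lemma avoiding_ratio_bounds (R : realFieldType) r s F :
  (s < n)%N -> (s <= r)%N -> (r <= n)%N -> F \subset ksets s ->
  let p : R := 'C(r, s)%:R / 'C(n, s)%:R in
  let q : R := #|avoiding r F|%:R / 'C(n, r)%:R in
  1 - #|F|%:R * p <= q <= 1 - #|F|%:R * p * (1 - #|F|%:R * ((r - s)%:R / (n - s)%:R)).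
Proof.
move=> sn sr rn Fs /=.
have Nr_gt0 : (0 : R) < 'C(n, r)%:R by rewrite ltr0n bin_gt0.
have Ns_gt0 : (0 : R) < 'C(n, s)%:R by rewrite ltr0n bin_gt0 ltnW.
have ns_gt0 : (0 : R) < (n - s)%:R by rewrite ltr0n subn_gt0.
have pE : 'C(r, s)%:R / 'C(n, s)%:R = 'C(n - s, r - s)%:R / 'C(n, r)%:R :> R.
  apply/eqP; rewrite eqr_div ?(lt0r_neq0 Ns_gt0) ?(lt0r_neq0 Nr_gt0) // -!natrM.
  by rewrite eqr_nat mulnC mul_bin_bin // mulnC.
have j2 := bin_le_exp #|F| 2.
have [lo hi] := andP (card_avoiding_bounds sr Fs).
move: lo hi (sum_bin2_covered r Fs) j2; rewrite -!(ler_nat R) natrX !natrD !natrM pE.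
set j : R := #|F|%:R; set D : R := 'C(n - s, r - s)%:R; set a : R := #|avoiding r F|%:R.
set Nr : R := 'C(n, r)%:R; set Q : R := (\sum_(h in ksets r) _)%:R.
move=> lo hi hQ j2.
have QD : Q <= j * j * ((r - s)%:R / (n - s)%:R) * D.
  rewrite (_ : _ * D = j * j * ((r - s)%:R * D) / (n - s)%:R); last first.
    by field; rewrite lt0r_neq0.
  rewrite ler_pdivlMr // mulrC; apply: le_trans hQ _.
  by rewrite ler_wpM2r // mulr_ge0.
apply/andP; split.
  rewrite ler_pdivlMr // (_ : _ * Nr = Nr - j * D); first lra.
  by field; rewrite lt0r_neq0.
rewrite ler_pdivrMr //.
rewrite (_ : _ * Nr = Nr - j * D + j * j * ((r - s)%:R / (n - s)%:R) * D); first lra.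
by field; rewrite (lt0r_neq0 Nr_gt0) (lt0r_neq0 ns_gt0).
Qed.

End Collection.

Local Open Scope classical_set_scope.
Local Open Scope ring_scope.

Section Asymptotics.
Variable R : realType.

Lemma cvg_dist_le {T : Type} (F : set_system T) {FF : Filter F} (f g : T -> R) (l : R) :
  (\forall t \near F, `|f t - l| <= g t) -> g @ F --> 0 -> f @ F --> l.
Proof.
move=> fg g0.
have lB : l - g t @[t --> F] --> l - 0 by apply: cvgB => //; exact: cvg_cst.
have lD : l + g t @[t --> F] --> l + 0 by apply: cvgD => //; exact: cvg_cst.
rewrite subr0 in lB; rewrite addr0 in lD.
by apply: (squeeze_cvgr _ lB lD); apply: filterS fg => t; rewrite ler_distl.
Qed.

Lemma ln_le_mul (e : R) : 0 < e -> \forall z \near +oo, ln z <= e * z.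
Proof.
move=> e_gt0; near=> z.
have z_ge1 : 1 <= z by near: z; apply: nbhs_pinfty_ge; exact: num_real.
have z_ge : 2 / (e * e) <= z by near: z; apply: nbhs_pinfty_ge; exact: num_real.
have lnz_ge0 : 0 <= ln z by exact: ln_ge0.
have ln2 : ln z ^+ 2 <= 2 * z.
  have := expR_ge1Dxn 1 lnz_ge0; rewrite lnK ?posrE; last lra.
  rewrite (_ : (2`!)%:R = 2 :> R) //; lra.
have ez : 2 * z <= e * e * z * z.
  by rewrite ler_wpM2r ?(le_trans ler01 z_ge1) // -ler_pdivrMl ?mulr_gt0.
rewrite leNgt; apply/negP => lt_ez.
have : (e * z) ^+ 2 < ln z ^+ 2.
  by rewrite ltr_pXn2r // nnegrE mulr_ge0 ?(ltW e_gt0) ?(le_trans ler01 z_ge1).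
nra.
Unshelve. all: by end_near.
Qed.

Lemma ln_div_cvg0 : ln z / z @[z --> +oo] --> (0 : R).
Proof.
apply/cvgrPdist_le => e e_gt0; near=> z.
have z_ge1 : 1 <= z by near: z; apply: nbhs_pinfty_ge; exact: num_real.
have le_ez : ln z <= e * z by near: z; exact: ln_le_mul.
have z_gt0 : 0 < z by lra.
by rewrite sub0r normrN ger0_norm ?divr_ge0 ?ln_ge0 ?(ltW z_gt0) // ler_pdivrMr.
Unshelve. all: by end_near.
Qed.

Lemma ln1B_bounds (y : R) : 0 <= y <= 1 / 2 -> - y - 2 * y ^+ 2 <= ln (1 - y) <= - y.
Proof.
case/andP=> y_ge0 y_le; have q_gt0 : 0 < 1 - y by lra.
apply/andP; split; last by rewrite le_ln1Dx //; lra.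
have : ln (1 + y / (1 - y)) <= y / (1 - y).
  by rewrite le_ln1Dx // (lt_le_trans _ (divr_ge0 y_ge0 (ltW q_gt0))) // ltrN10.
rewrite (_ : 1 + y / (1 - y) = (1 - y)^-1); last by field; rewrite lt0r_neq0.
have : y / (1 - y) <= y + 2 * y ^+ 2 by rewrite ler_pdivrMr //; nra.
rewrite lnV ?posrE //; lra.
Qed.

Lemma ln1B_pow_estimate (L p k e J : R) :
  0 < p -> 0 <= L -> 0 <= J -> 0 <= k -> 0 <= e <= 1 -> J * p <= 1 / 2 ->
  L / p - 1 <= k <= L / p ->
  `|k * ln (1 - J * p * (1 - e)) + J * L| <= J * L * e + J * p + 2 * J ^+ 2 * L * p.
Proof.
move=> p_gt0 L_ge0 J_ge0 k_ge0 /andP [e_ge0 e_le1] Jp_le /andP [k_ge k_le].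
set y := J * p * (1 - e).
have Je : 0 <= J * (1 - e) <= J by apply/andP; split; nra.
have y_le : y <= J * p by rewrite /y; nra.
have /andP [lo hi] : - y - 2 * y ^+ 2 <= ln (1 - y) <= - y.
  by apply: ln1B_bounds; apply/andP; split; rewrite /y; nra.
have kp : L - p <= k * p <= L.
  have E1 : (L / p - 1) * p = L - p by field; rewrite lt0r_neq0.
  have E2 : L / p * p = L by rewrite divfK ?lt0r_neq0.
  by apply/andP; split; [rewrite -E1 | rewrite -E2]; rewrite ler_pM2r.
have /andP [ky_ge ky_le] : (L - p) * (J * (1 - e)) <= k * y <= L * (J * (1 - e)).
  rewrite (_ : k * y = k * p * (J * (1 - e))); last by rewrite /y; ring.
  by case/andP: kp => kp_ge kp_le; apply/andP; split; apply: ler_wpM2r => //; case/andP: Je.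
have ky2 : k * y ^+ 2 <= L * J ^+ 2 * p.
  rewrite (_ : k * y ^+ 2 = k * p * (J * (1 - e)) ^+ 2 * p); last by rewrite /y; ring.
  case/andP: kp => _ kp_le; case/andP: Je => Je_ge Je_le.
  apply: ler_wpM2r; [exact: ltW | apply: ler_pM => //].
  - by apply: mulr_ge0 => //; lra.
  - exact: exprn_ge0.
  - by rewrite ler_pXn2r ?nnegrE.
have k_lo : k * (- y - 2 * y ^+ 2) <= k * ln (1 - y) by exact: ler_wpM2l.
have k_hi : k * ln (1 - y) <= k * (- y) by exact: ler_wpM2l.
have JLe_ge0 : 0 <= J * L * e by rewrite !mulr_ge0.
have Jpe_ge0 : 0 <= J * p * e by rewrite !mulr_ge0 // ltW.
have JLp_ge0 : 0 <= J ^+ 2 * L * p by rewrite !mulr_ge0 // ?exprn_ge0 // ltW.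
rewrite ler_norml; apply/andP; split; nra.
Qed.

Lemma bin_div_exp_cvg (N : nat -> nat) (j : nat) : ((N n)%:R : R) @[n --> \oo] --> +oo ->
  'C(N n, j)%:R / (N n)%:R ^+ j @[n --> \oo] --> ((j`!%:R)^-1 : R).
Proof.
move=> Ny; have N_ge : forall A : R, \forall n \near \oo, A <= (N n)%:R by apply/cvgryPge.
have N_gt0 : \forall n \near \oo, (0 : R) < (N n)%:R.
  by near=> n; apply: (lt_le_trans ltr01); near: n; exact: N_ge.
have invN0 : ((N n)%:R)^-1 @[n --> \oo] --> (0 : R) by apply/(gtr0_cvgV0 N_gt0).
have base : 1 - j%:R * ((N n)%:R)^-1 @[n --> \oo] --> (1 - j%:R * 0 : R).
  by apply: cvgB; [exact: cvg_cst | apply: cvgM => //; exact: cvg_cst].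
rewrite mulr0 subr0 in base.
have pow : (1 - j%:R * ((N n)%:R)^-1) ^+ j @[n --> \oo] --> (1 : R) ^+ j.
  by apply: (@continuous_cvg _ _ _ _ _ _ (fun x : R => x ^+ j)) => //; exact: exprn_continuous.
have lo : (1 - j%:R * ((N n)%:R)^-1) ^+ j / j`!%:R @[n --> \oo] --> (1 : R) ^+ j / j`!%:R.
  by apply: cvgM => //; exact: cvg_cst.
rewrite expr1n mul1r in lo.
apply: (squeeze_cvgr _ lo (cvg_cst _)); near=> n.
have jN : (j <= N n)%N by rewrite -(ler_nat R); near: n; exact: N_ge.
have Npos : (0 : R) < (N n)%:R by near: n.
have fact_gt0 : (0 : R) < j`!%:R by rewrite ltr0n fact_gt0.
have /andP [ff_ge ff_le] := ffact_bounds (N n) j.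
have binE : 'C(N n, j)%:R = (N n ^_ j)%:R / j`!%:R :> R.
  by rewrite -bin_ffact natrM mulfK ?lt0r_neq0.
have baseE : 1 - j%:R * ((N n)%:R)^-1 = (N n - j)%:R / (N n)%:R :> R.
  by rewrite natrB //; field; rewrite lt0r_neq0.
rewrite binE baseE expr_div_n mulrAC; apply/andP; split.
  by rewrite !ler_pM2r ?invr_gt0 ?exprn_gt0 // -natrX ler_nat.
rewrite mulrAC -[X in _ <= X]mul1r ler_pM2r ?invr_gt0 //.
by rewrite ler_pdivrMr ?exprn_gt0 // mul1r -natrX ler_nat.
Unshelve. all: by end_near.
Qed.

Section BinomialPower.
Variables (N k : nat -> nat) (e : nat -> R) (c x : R).
Hypotheses (c_gt0 : 0 < c) (N_cvgy : ((N n)%:R : R) @[n --> \oo] --> +oo).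
Hypothesis k_near : \forall n \near \oo,
  (ln (N n)%:R + x) / (c / (N n)%:R) - 1 <= (k n)%:R <= (ln (N n)%:R + x) / (c / (N n)%:R).
Hypotheses (e_ge0 : \forall n \near \oo, 0 <= e n)
  (e_ln_cvg0 : e n * ln (N n)%:R @[n --> \oo] --> 0).

Lemma e_cvg0 : e n @[n --> \oo] --> 0.
Proof.
have N_ge : forall A : R, \forall n \near \oo, A <= (N n)%:R by apply/cvgryPge.
apply: (squeeze_cvgr _ (cvg_cst 0) e_ln_cvg0); near=> n.
have N_ge_e : expR 1 <= (N n)%:R :> R by near: n.
have lnN_ge1 : 1 <= ln (N n)%:R :> R.
  have N_pos : 0 < (N n)%:R :> R := lt_le_trans (expR_gt0 1) N_ge_e.
  by move: N_ge_e; rewrite -ler_ln ?posrE ?expR_gt0 // expRK.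
have e_ge : 0 <= e n by near: n.
by apply/andP; split => //; nra.
Unshelve. all: by end_near.
Qed.

Lemma div_cvg0 : c / (N n)%:R @[n --> \oo] --> 0.
Proof.
have N_gt : forall A : R, \forall n \near \oo, A < (N n)%:R by apply/cvgryPgt.
have N_gt0 := N_gt 0.
have invN0 : ((N n)%:R)^-1 @[n --> \oo] --> (0 : R) by apply/(gtr0_cvgV0 N_gt0).
have p0 : c / (N n)%:R @[n --> \oo] --> (c * 0 : R) by apply: cvgM => //; exact: cvg_cst.
by rewrite mulr0 in p0.
Qed.

Lemma bin_pow_near j : \forall n \near \oo, [/\ (0 : R) < (N n)%:R, 0 <= ln (N n)%:R + x,
  0 <= e n <= 1 & j%:R * (c / (N n)%:R) <= 1 / 2].
Proof.
have jp0 : j%:R * (c / (N n)%:R) @[n --> \oo] --> (j%:R * 0 : R).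
  by apply: cvgM => //; [exact: cvg_cst | exact: div_cvg0].
have N_ge : forall A : R, \forall n \near \oo, A <= (N n)%:R by apply/cvgryPge.
have N_gt : forall A : R, \forall n \near \oo, A < (N n)%:R by apply/cvgryPgt.
rewrite mulr0 in jp0; near=> n; split.
- by near: n.
- rewrite -lerBlDr sub0r -[- x]expRK ler_ln ?posrE ?expR_gt0 //; first by near: n.
  by apply: (lt_le_trans (expR_gt0 (- x))); near: n.
- by apply/andP; split; near: n; [exact: e_ge0 | apply: (cvgr_le _ e_cvg0); exact: ltr01].
- by near: n; apply: (cvgr_le _ jp0); lra.
Unshelve. all: by end_near.
Qed.

Lemma exponent_cvg j :
  j%:R * ln (N n)%:R + (k n)%:R * ln (1 - j%:R * (c / (N n)%:R) * (1 - e n))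
    @[n --> \oo] --> - (j%:R * x).
Proof.
have lnN0 : ln (N n)%:R / (N n)%:R @[n --> \oo] --> (0 : R) :=
  cvg_comp _ _ N_cvgy ln_div_cvg0.
have err0 : j%:R * (e n * ln (N n)%:R) + j%:R * x * e n + j%:R * (c / (N n)%:R) +
    2 * j%:R ^+ 2 * c * (ln (N n)%:R / (N n)%:R) + 2 * j%:R ^+ 2 * x * (c / (N n)%:R)
    @[n --> \oo] --> (j%:R * 0 + j%:R * x * 0 + j%:R * 0 + 2 * j%:R ^+ 2 * c * 0 +
                      2 * j%:R ^+ 2 * x * 0 : R).
  have e0 := e_cvg0; have p0 := div_cvg0.
  by repeat apply: cvgD; apply: cvgM => //; exact: cvg_cst.
rewrite !mulr0 !addr0 in err0; apply: (cvg_dist_le _ err0).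
move: (bin_pow_near j) k_near; apply: filterS2 => n [N_pos L_ge0 e01 jp_le] kb.
rewrite (_ : _ - _ = (k n)%:R * ln (1 - j%:R * (c / (N n)%:R) * (1 - e n)) +
                     j%:R * (ln (N n)%:R + x)); last ring.
apply: le_trans (ln1B_pow_estimate _ _ _ _ e01 jp_le kb) _; rewrite ?divr_gt0 //.
by rewrite le_eqVlt; apply/orP; left; apply/eqP; ring.
Qed.

Lemma bin_pow_cvg j :
  'C(N n, j)%:R * (1 - j%:R * (c / (N n)%:R) * (1 - e n)) ^+ k n @[n --> \oo] -->
    expR (- x) ^+ j / j`!%:R.
Proof.
have expE := @continuous_cvg _ _ _ _ _ _ expR _ (@continuous_expR R _) (exponent_cvg (j := j)).
have lim : 'C(N n, j)%:R / (N n)%:R ^+ j *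
    expR (j%:R * ln (N n)%:R + (k n)%:R * ln (1 - j%:R * (c / (N n)%:R) * (1 - e n)))
    @[n --> \oo] --> (j`!%:R)^-1 * expR (- (j%:R * x)).
  by apply: cvgM; [exact: bin_div_exp_cvg | exact: expE].
rewrite -mulrN expRM_natl mulrC in lim.
apply: cvg_trans lim; apply: near_eq_cvg.
apply: filterS (bin_pow_near j) => n [N_pos _ /andP [e_ge e_le1] jp_le].
have jp_ge0 : 0 <= j%:R * (c / (N n)%:R) by rewrite mulr_ge0 ?divr_ge0 // ltW.
have q_gt0 : 0 < 1 - j%:R * (c / (N n)%:R) * (1 - e n) by nra.
rewrite expRD !expRM_natl !lnK ?posrE //.
by rewrite [_ / _ * _]mulrA divfK // expf_neq0 // lt0r_neq0.
Qed.

End BinomialPower.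

Lemma alt_exp_cvg (y : R) :
  \sum_(j < m.+1) (-1) ^+ j * (y ^+ j / j`!%:R) @[m --> \oo] --> expR (- y).
Proof.
have := is_cvg_series_exp_coeff (- y); rewrite -cvg_shiftS => exp_cvg.
rewrite (_ : (fun m => _) = [sequence series (exp_coeff (- y)) m.+1]_m) //.
apply/funext => m /=; rewrite /series /= big_mkord.
by apply: eq_bigr => j _; rewrite /exp_coeff /= [in RHS]exprNn mulrA.
Qed.

Lemma bonferroni_squeeze (P b : nat -> R) (B : nat -> nat -> R) (g : R) :
  (forall m, B m n @[n --> \oo] --> b m) -> b m @[m --> \oo] --> g ->
  (forall m, \forall n \near \oo, if odd m then B m n <= P n else P n <= B m n) ->
  P n @[n --> \oo] --> g.
Proof.
move=> Bb bg PB; apply/cvgrPdist_lt => e e_gt0.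
have e2_gt0 : 0 < e / 2 by rewrite divr_gt0.
move/cvgrPdist_lt: bg => /(_ _ e2_gt0) [M _ bM].
have bM0 : `|g - b M.*2| < e / 2 by apply: bM; rewrite /= -addnn leq_addr.
have bM1 : `|g - b M.*2.+1| < e / 2 by apply: bM; apply/leqW; rewrite -addnn leq_addr.
have PB0 := PB M.*2; have PB1 := PB M.*2.+1; rewrite /= odd_double /= in PB0 PB1.
move/cvgrPdist_lt: (Bb M.*2) => /(_ _ e2_gt0) BM0.
move/cvgrPdist_lt: (Bb M.*2.+1) => /(_ _ e2_gt0) BM1.
near=> n.
have B0 : `|b M.*2 - B M.*2 n| < e / 2 by near: n.
have B1 : `|b M.*2.+1 - B M.*2.+1 n| < e / 2 by near: n.
have P0 : P n <= B M.*2 n by near: n.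
have P1 : B M.*2.+1 n <= P n by near: n.
move: bM0 bM1 B0 B1; rewrite !ltr_norml => /andP [? ?] /andP [? ?] /andP [? ?] /andP [? ?].
by apply/andP; split; lra.
Unshelve. all: by end_near.
Qed.

End Asymptotics.

Section CouponCollector.
Variables (R : realType) (r s : nat) (x : R).
Hypotheses (s_gt0 : (0 < s)%N) (sr : (s <= r)%N).

Lemma bin_cvgy : ('C(n, s)%:R : R) @[n --> \oo] --> +oo.
Proof.
apply/cvgryPge => A; near=> n.
have n_ge : (s + Num.truncn A <= n)%N by near: n; exact: nbhs_infty_ge.
have lt_C : (Num.truncn A < 'C(n, s))%N.
  have := bin_gt_sub (n - s) s_gt0; rewrite subnKC; last lia.
  by apply: leq_ltn_trans; lia.
by apply: le_trans (ltW (truncnS_gt A)) _; rewrite ler_nat.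
Unshelve. all: by end_near.
Qed.

Lemma ln_bin_div_cvg0 : ln 'C(n, s)%:R / (n - s)%:R @[n --> \oo] --> (0 : R).
Proof.
have lnn : ln n%:R / n%:R @[n --> \oo] --> (0 : R) := cvg_comp _ _ cvgr_idn (@ln_div_cvg0 R).
have up : 2 * s%:R * (ln n%:R / n%:R) @[n --> \oo] --> (2 * s%:R * 0 : R).
  by apply: cvgM => //; exact: cvg_cst.
rewrite mulr0 in up; apply: (squeeze_cvgr _ (cvg_cst 0) up); near=> n.
have n_gt : (2 * s < n)%N by near: n; exact: nbhs_infty_gt.
have C_ge1 : 1 <= 'C(n, s)%:R :> R by rewrite ler1n bin_gt0; lia.
have ns_gt0 : 0 < (n - s)%:R :> R by rewrite ltr0n; lia.
have n_gt0 : 0 < n%:R :> R by rewrite ltr0n; lia.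
have lnn_ge0 : 0 <= ln n%:R :> R by rewrite ln_ge0 // ler1n; lia.
have ln_le : ln 'C(n, s)%:R <= s%:R * ln n%:R :> R.
  rewrite mulr_natl -lnXn // ler_ln ?posrE ?exprn_gt0 //; last lra.
  by rewrite -natrX ler_nat bin_le_exp.
have inv_le : (n - s)%:R^-1 <= 2 * n%:R^-1 :> R.
  rewrite -div1r ler_pdivrMr // mulrAC ler_pdivlMr // mul1r natrB; last lia.
  have : (2 * s)%:R < n%:R :> R by rewrite ltr_nat.
  by rewrite natrM; lra.
apply/andP; split; first by rewrite divr_ge0 ?ln_ge0 // ltW.
rewrite (_ : 2 * s%:R * _ = s%:R * ln n%:R * (2 * n%:R^-1)); last ring.
apply: le_trans (_ : s%:R * ln n%:R / (n - s)%:R <= _).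
  by rewrite ler_wpM2r // invr_ge0 ltW.
by rewrite ler_wpM2l ?mulr_ge0.
Unshelve. all: by end_near.
Qed.

Definition threshold n : nat := Num.truncn (Defs.center R n r s + Defs.scale R n r s * x).

Lemma center_scaleE n : Defs.center R n r s + Defs.scale R n r s * x =
  (ln 'C(n, s)%:R + x) / ('C(r, s)%:R / 'C(n, s)%:R).
Proof. by rewrite /Defs.center /Defs.scale invf_div; ring. Qed.

Lemma ln_bin_add_ge0 : \forall n \near \oo, 0 <= ln 'C(n, s)%:R + x.
Proof.
have C_ge : forall A : R, \forall n \near \oo, A <= 'C(n, s)%:R by apply/cvgryPge/bin_cvgy.
near=> n; have C_ge_exp : expR (- x) <= 'C(n, s)%:R by near: n.
rewrite -lerBlDr sub0r -[- x]expRK ler_ln ?posrE ?expR_gt0 //.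
exact: lt_le_trans (expR_gt0 _) C_ge_exp.
Unshelve. all: by end_near.
Qed.

Lemma center_scale_ge0 :
  \forall n \near \oo, 0 <= Defs.center R n r s + Defs.scale R n r s * x.
Proof.
by apply: filterS ln_bin_add_ge0 => n L_ge0; rewrite center_scaleE divr_ge0 ?divr_ge0.
Qed.

Lemma threshold_bounds : \forall n \near \oo,
  (ln 'C(n, s)%:R + x) / ('C(r, s)%:R / 'C(n, s)%:R) - 1 <= (threshold n)%:R <=
  (ln 'C(n, s)%:R + x) / ('C(r, s)%:R / 'C(n, s)%:R).
Proof.
apply: filterS center_scale_ge0 => n /truncn_itv /andP [lo hi].
rewrite /threshold -center_scaleE.
by move: hi; rewrite -natr1 => hi; apply/andP; split => //; lra.
Qed.

Lemma normalized_cdfE : \forall n \near \oo,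
  normalized_cdf n r s x = prob_T_le_nat R n r s (threshold n).
Proof.
by apply: filterS center_scale_ge0 => n y_ge0; rewrite /normalized_cdf /prob_T_le ltNge y_ge0.
Qed.

Lemma bin_moment_bounds j : \forall n \near \oo,
  'C('C(n, s), j)%:R * (1 - j%:R * ('C(r, s)%:R / 'C(n, s)%:R)) ^+ threshold n <=
  bin_moment n R r s (threshold n) j <=
  'C('C(n, s), j)%:R * (1 - j%:R * ('C(r, s)%:R / 'C(n, s)%:R) *
    (1 - j%:R * ((r - s)%:R / (n - s)%:R))) ^+ threshold n.
Proof.
have C_ge : forall A : R, \forall n \near \oo, A <= 'C(n, s)%:R by apply/cvgryPge/bin_cvgy.
near=> n.
have rn : (r < n)%N by near: n; exact: nbhs_infty_gt.
have C_gt0 : 0 < 'C(n, s)%:R :> R by rewrite ltr0n bin_gt0 (leq_trans sr) // ltnW.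
have jp_le1 : j%:R * ('C(r, s)%:R / 'C(n, s)%:R) <= 1 :> R.
  by rewrite mulrA ler_pdivrMr // mul1r; near: n.
have sum_const (y : R) : 'C('C(n, s), j)%:R * y = \sum_(F in families n s j) y.
  by rewrite sumr_const /families cards_draws card_ksets mulr_natl.
rewrite /bin_moment !sum_const.
apply/andP; split; apply: ler_sum => F; rewrite inE => /andP [Fs /eqP Fj];
  have := avoiding_ratio_bounds R (leq_ltn_trans sr rn) sr (ltnW rn) Fs;
  rewrite /= Fj => /andP [q_ge q_le].
  by apply: lerXn2r; rewrite // nnegrE ?subr_ge0 ?divr_ge0 ?ler0n.
have q_ge0 : 0 <= #|avoiding r F|%:R / 'C(n, r)%:R :> R by rewrite divr_ge0.
by apply: lerXn2r; rewrite // nnegrE (le_trans q_ge0).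
Unshelve. all: by end_near.
Qed.

Lemma bin_moment_cvg j :
  bin_moment n R r s (threshold n) j @[n --> \oo] --> expR (- x) ^+ j / j`!%:R.
Proof.
have c_gt0 : 0 < 'C(r, s)%:R :> R by rewrite ltr0n bin_gt0.
have lower : 'C('C(n, s), j)%:R * (1 - j%:R * ('C(r, s)%:R / 'C(n, s)%:R)) ^+
    threshold n @[n --> \oo] --> expR (- x) ^+ j / j`!%:R.
  have lower0 : 'C('C(n, s), j)%:R * (1 - j%:R * ('C(r, s)%:R / 'C(n, s)%:R) * (1 - 0)) ^+
      threshold n @[n --> \oo] --> expR (- x) ^+ j / j`!%:R.
    apply: bin_pow_cvg => //; [exact: bin_cvgy | exact: threshold_bounds | exact: nearW |].
    by under eq_fun do rewrite mul0r; exact: cvg_cst.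
  apply: cvg_trans lower0; apply: near_eq_cvg.
  by apply: nearW => n; rewrite subr0 mulr1.
have upper : 'C('C(n, s), j)%:R * (1 - j%:R * ('C(r, s)%:R / 'C(n, s)%:R) *
    (1 - j%:R * ((r - s)%:R / (n - s)%:R))) ^+ threshold n @[n --> \oo] -->
    expR (- x) ^+ j / j`!%:R.
  apply: bin_pow_cvg => //; [exact: bin_cvgy | exact: threshold_bounds | |].
    by apply: nearW => n; rewrite mulr_ge0 ?divr_ge0.
  have lim : j%:R * (r - s)%:R * (ln 'C(n, s)%:R / (n - s)%:R) @[n --> \oo] -->
      (j%:R * (r - s)%:R * 0 : R).
    by apply: cvgM => //; [exact: cvg_cst | exact: ln_bin_div_cvg0].
  rewrite mulr0 in lim; apply: cvg_trans lim; apply: near_eq_cvg.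
  by apply: nearW => n /=; ring.
by apply: (squeeze_cvgr _ lower upper); exact: bin_moment_bounds.
Qed.

Lemma bonferroni_sum_cvg m :
  \sum_(j < m.+1) (-1) ^+ j * bin_moment n R r s (threshold n) j @[n --> \oo] -->
  \sum_(j < m.+1) (-1) ^+ j * (expR (- x) ^+ j / j`!%:R).
Proof.
apply: cvg_big => //; first exact: add_continuous.
by move=> j _; apply: cvgM; [exact: cvg_cst | exact: bin_moment_cvg].
Qed.

End CouponCollector.

Theorem theorem3 (R : realType) (r s : nat) (hs : (1 <= s)%N) (hsr : (s <= r)%N)
  (x : R) :
  (fun n : nat => @normalized_cdf R n r s x) @ \oo --> @gumbel_cdf R x.
Proof.
apply: (bonferroni_squeeze (fun m => @bonferroni_sum_cvg R r s x hs hsr m)).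
  exact: alt_exp_cvg.
move=> m; move: (normalized_cdfE x hs hsr) (nbhs_infty_ge r).
by apply: filterS2 => n -> rn; apply: bonferroni_collected.
Qed.
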